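(* Let $\mu \in \mathcal{X}$ and let $P_X$ be a probability distribution on $\mathcal{X}$. (i) If $D(\mu ; P_X) = 0$ then $D_L(\mu ; P_X) = 0$. (ii) If $D(\mu ; P_X) = 2$ then $D_L(\mu ; P_X) = 1$.
   Context: $(\mathcal{X}, d)$ is a complete separable metric space with its Borel $\sigma$-algebra. Define $h: \mathcal{X}^3 \to \mathbb{R}$ by $h(x_1, x_2, x_3) := \mathbb{I}( x_3 \notin \{x_1, x_2\} ) \dfrac{ d^2(x_1, x_3) + d^2(x_2, x_3) - d^2(x_1, x_2) }{d(x_1, x_3)\, d(x_2, x_3) }$, where $h := 0$ when $x_3 \in \{x_1,x_2\}$. The metric spatial depth of $\mu \in \mathcal{X}$ with respect to a probability distribution $P_X$ on $\mathcal{X}$ is $D(\mu; P_X) := 1 - \frac{1}{2} \mathrm{E} \{ h(X_1, X_2, \mu) \}$, where $X_1, X_2 \sim P_X$ are independent. The metric lens depth is $D_L(\mu ; P_X) := P[ d(X_1, X_2) \geq \max \{ d( X_1, \mu), d( X_2, \mu) \} ]$ with $X_1, X_2 \sim P_X$ independent. *)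

From HB Require Import structures.
From mathcomp Require Import all_boot all_order all_algebra.
From mathcomp Require Import all_classical all_reals all_analysis.
Set Implicit Arguments. Unset Strict Implicit. Unset Printing Implicit Defensive.
Import Order.TTheory GRing.Theory Num.Theory.
Local Open Scope classical_set_scope.
Local Open Scope ring_scope.

Definition is_metric (R : realType) (T : Type) (dist : T -> T -> R) : Prop :=
  [/\ forall x y, 0 <= dist x y,
      forall x y, dist x y = 0 <-> x = y,
      forall x y, dist x y = dist y x &
      forall x y z, dist x z <= dist x y + dist y z].

Definition dopen (R : realType) (T : Type) (dist : T -> T -> R) (A : set T) : Prop :=
  forall x, A x -> exists2 r : R, 0 < r & [set y | dist x y < r] `<=` A.

Definition dcomplete (R : realType) (T : Type) (dist : T -> T -> R) : Prop :=
  forall u : nat -> T,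
    (forall e : R, 0 < e -> exists N, forall m n, (N <= m)%N -> (N <= n)%N ->
        dist (u m) (u n) < e) ->
    exists l : T, forall e : R, 0 < e -> exists N, forall n, (N <= n)%N ->
        dist (u n) l < e.

Definition dseparable (R : realType) (T : Type) (dist : T -> T -> R) : Prop :=
  exists u : nat -> T, forall x (e : R), 0 < e -> exists n, dist x (u n) < e.

Definition borel_of (R : realType) (d : measure_display) (T : measurableType d)
  (dist : T -> T -> R) : Prop :=
  (@measurable d T) = <<s dopen dist >>.

Definition hker (R : realType) (T : eqType) (dist : T -> T -> R) (x1 x2 x3 : T) : R :=
  if (x3 != x1) && (x3 != x2) then
    (dist x1 x3 ^+ 2 + dist x2 x3 ^+ 2 - dist x1 x2 ^+ 2) / (dist x1 x3 * dist x2 x3)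
  else 0.

Definition spatial_depth (R : realType) (d : measure_display) (T : measurableType d)
  (dist : T -> T -> R) (P : probability T R) (mu : T) : \bar R :=
  (1%:E - 2^-1%:E * \int[(P \x P)%E]_z (hker dist z.1 z.2 mu)%:E)%E.

Definition lens_depth (R : realType) (d : measure_display) (T : measurableType d)
  (dist : T -> T -> R) (P : probability T R) (mu : T) : \bar R :=
  (P \x P)%E [set z | Num.max (dist z.1 mu) (dist z.2 mu) <= dist z.1 z.2].

From HB Require Import structures.
From mathcomp Require Import all_boot all_order all_algebra.
From mathcomp Require Import all_classical all_reals all_analysis.
From mathcomp Require Import lra measurable_realfun.
Set Implicit Arguments. Unset Strict Implicit. Unset Printing Implicit Defensive.
Import Order.TTheory GRing.Theory Num.Theory.
Local Open Scope classical_set_scope.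
Local Open Scope ring_scope.

(* Write a = d(x1, mu), b = d(x2, mu), c = d(x1, x2).  Away from the
   degenerate case the kernel is h = (a^2 + b^2 - c^2) / (a b), i.e. twice the
   cosine of the angle at mu of a Euclidean triangle with sides a, b, c, so
   -2 <= h <= 2; moreover h <= 1 on the lens {max(a, b) <= c} and h >= 0 off
   it.  Hence h + 1_lens <= 2 and -2 + 1_(~lens) <= h pointwise.  D = 0 means
   E h = 2 and D = 2 means E h = -2; integrating the two inequalities against
   the product probability P x P forces P x P (lens) = 0, respectively
   P x P (~lens) = 0, which is the claim. *)

Section cosine_ratio.
Variable R : realFieldType.

Definition triangle (a b c : R) : Prop :=
  [/\ 0 <= a, 0 <= b, c <= a + b, a <= c + b & b <= c + a].

(* Twice the cosine of the angle between the sides a and b opposite to c;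
   it is 0 when a b = 0 because x / 0 = 0. *)
Definition cosine_ratio (a b c : R) : R := (a ^+ 2 + b ^+ 2 - c ^+ 2) / (a * b).

Lemma cosine_ratio_cases (a b c : R) : 0 <= a -> 0 <= b ->
  cosine_ratio a b c = 0 \/ 0 < a * b.
Proof.
move=> a0 b0; have [ab0|abN0] := eqVneq (a * b) 0; last first.
  by right; rewrite lt0r abN0 mulr_ge0.
by left; rewrite /cosine_ratio ab0 invr0 mulr0.
Qed.

(* |cos| <= 1: equivalent to |a - b| <= c <= a + b. *)
Lemma cosine_ratio_bound (a b c : R) : triangle a b c ->
  -2 <= cosine_ratio a b c <= 2.
Proof.
case=> a0 b0 tri_c tri_a tri_b.
have [->|abpos] := cosine_ratio_cases c a0 b0; first by apply/andP; split; lra.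
have hlo : 0 <= (a + b - c) * (a + b + c) by apply: mulr_ge0; lra.
have hup : 0 <= (c - (a - b)) * (c + (a - b)) by apply: mulr_ge0; lra.
by rewrite ler_pdivlMr // ler_pdivrMr //; apply/andP; split; nra.
Qed.

Lemma cosine_ratio_le1 (a b c : R) : triangle a b c ->
  Num.max a b <= c -> cosine_ratio a b c <= 1.
Proof.
case=> a0 b0 _ _ _; rewrite ge_max => /andP[ac bc].
have [->|abpos] := cosine_ratio_cases c a0 b0; first by [].
rewrite ler_pdivrMr // mul1r; have [ab|ba] := lerP a b; nra.
Qed.

Lemma cosine_ratio_ge0 (a b c : R) : triangle a b c ->
  c < Num.max a b -> 0 <= cosine_ratio a b c.
Proof.
case=> a0 b0 _ tri_a tri_b; rewrite lt_max => /orP cab.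
have [->|abpos] := cosine_ratio_cases c a0 b0; first by [].
have c0 : 0 <= c by lra.
rewrite ler_pdivlMr // mul0r.
case: cab => [ca|cb].
  have : 0 <= (a - c) * (a + c) by apply: mulr_ge0; lra.
  by nra.
have : 0 <= (b - c) * (b + c) by apply: mulr_ge0; lra.
by nra.
Qed.

End cosine_ratio.

Lemma measurable_inv (R : realType) : measurable_fun setT (@GRing.inv R).
Proof.
have -> : [set: R] = [set x | x != 0] `|` [set 0].
  by apply/seteqP; split => x //= _; case: (eqVneq x 0) => ?; [right|left].
have m1 : measurable [set x : R | x != 0].
  exact: open_measurable (@open_neq R 0).
apply/(measurable_funU _ m1 (measurable_set1 0)).
split; last exact: measurable_fun_set1.
apply: open_continuous_measurable_fun; first exact: open_neq.
by apply/in_setP => x /= x0; exact: inv_continuous.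
Qed.

Section metric_measurability.
Variables (R : realType) (d : measure_display) (T : measurableType d)
  (dist : T -> T -> R).
Hypotheses (dist_metric : is_metric dist) (dist_sep : dseparable dist)
  (dist_borel : borel_of dist).

Let real_borelE : (@measurable _ R) = <<s @RGenInftyO.G R >>.
Proof. exact: RGenInftyO.measurableE. Qed.

(* x |-> d(x, a) is continuous, so preimages of open rays are open. *)
Lemma measurable_dist_to (a : T) : measurable_fun setT (fun x => dist x a).
Proof.
case: dist_metric => _ _ dsym dtri.
apply: (measurability _ real_borelE) => _ [_ [r ->] <-].
rewrite setTI dist_borel; apply: sub_sigma_algebra => x /=; rewrite in_itv /= => hx.
exists (r - dist x a); first by rewrite subr_gt0.
move=> y /= hy; rewrite in_itv /=.
have := dtri y x a; rewrite (dsym y x); lra.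
Qed.

(* d(x, y) < r iff d(x, u n) + d(y, u n) < r for some point u n of a dense
   sequence, so {d < r} is a countable union of measurable sets. *)
Lemma measurable_dist : measurable_fun setT (fun z : T * T => dist z.1 z.2).
Proof.
case: dist_metric => _ _ dsym dtri.
case: dist_sep => u hu.
apply: (measurability _ real_borelE) => _ [_ [r ->] <-].
rewrite setTI.
have -> : (fun z : T * T => dist z.1 z.2) @^-1` `]-oo, r[ =
    \bigcup_n ((fun z : T * T => dist z.1 (u n) + dist z.2 (u n)) @^-1` `]-oo, r[).
  apply/seteqP; split => z /=; rewrite in_itv /=.
    move=> hz; have slack : 0 < (r - dist z.1 z.2) / 2 by rewrite divr_gt0 // subr_gt0.
    have [n hn] := hu z.1 _ slack; exists n => //=; rewrite in_itv /=.
    have := dtri z.2 z.1 (u n); rewrite (dsym z.2 z.1); lra.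
  move=> [n _] /=; rewrite in_itv /= => hn.
  have := dtri z.1 (u n) z.2; rewrite (dsym (u n) z.2); lra.
apply: bigcupT_measurable => n.
have mf : measurable_fun setT (fun z : T * T => dist z.1 (u n) + dist z.2 (u n)).
  apply: measurable_funD.
    exact: measurableT_comp (measurable_dist_to (u n)) measurable_fst.
  exact: measurableT_comp (measurable_dist_to (u n)) measurable_snd.
by have := mf measurableT _ (measurable_itv `]-oo, r[); rewrite setTI.
Qed.

End metric_measurability.

Section kernel.
Variables (R : realType) (T : eqType) (dist : T -> T -> R).
Hypothesis dist_metric : is_metric dist.

Lemma metric_triangle (x y mu : T) :
  triangle (dist x mu) (dist y mu) (dist x y).
Proof.
case: dist_metric => d0 _ dsym dtri.
split; [exact: d0 | exact: d0 | | exact: dtri |].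
  by rewrite (dsym y mu); exact: dtri.
by rewrite (dsym x y); exact: dtri.
Qed.

(* The indicator in h is harmless: if mu is x or y, the ratio is 0 anyway. *)
Lemma hker_cosine_ratio (x y mu : T) :
  hker dist x y mu = cosine_ratio (dist x mu) (dist y mu) (dist x y).
Proof.
case: dist_metric => _ deq _ _; have dmu0 : dist mu mu = 0 by apply/deq.
rewrite /hker; case: ifP => // /negbT; rewrite negb_and !negbK => /orP[]/eqP <-.
  by rewrite /cosine_ratio dmu0 mul0r invr0 mulr0.
by rewrite /cosine_ratio dmu0 mulr0 invr0 mulr0.
Qed.

Definition lens_set (mu : T) : set (T * T) :=
  [set z | Num.max (dist z.1 mu) (dist z.2 mu) <= dist z.1 z.2].

Lemma hker_bound (x y mu : T) : `|hker dist x y mu| <= 2.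
Proof. by rewrite ler_norml hker_cosine_ratio; apply/cosine_ratio_bound/metric_triangle. Qed.

Lemma hker_plus_lens_le2 (mu : T) (z : T * T) :
  hker dist z.1 z.2 mu + \1_(lens_set mu) z <= 2.
Proof.
have := hker_bound z.1 z.2 mu; rewrite ler_norml => /andP[_ hk2].
rewrite indicE; case: (boolP (z \in lens_set mu)) => [|_]; last by rewrite addr0.
rewrite inE hker_cosine_ratio => /(cosine_ratio_le1 (metric_triangle _ _ _)).
move=> le1 /=; lra.
Qed.

Lemma lensC_minus2_le_hker (mu : T) (z : T * T) :
  -2 + \1_(~` lens_set mu) z <= hker dist z.1 z.2 mu.
Proof.
have := hker_bound z.1 z.2 mu; rewrite ler_norml => /andP[hk2 _].
rewrite indicE; case: (boolP (z \in ~` lens_set mu)) => [|_]; last by rewrite addr0.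
rewrite inE /= /lens_set /= => /negP; rewrite -ltNge hker_cosine_ratio.
move=> /(cosine_ratio_ge0 (metric_triangle _ _ _)); lra.
Qed.

End kernel.

Section probability_gap.
Local Open Scope ereal_scope.
Variables (d : measure_display) (T : measurableType d) (R : realType)
  (m : probability T R).

Lemma bounded_integrable (f : T -> R) (M : R) :
  measurable_fun setT f -> (forall z, (`|f z| <= M)%R) ->
  m.-integrable setT (EFin \o f).
Proof.
move=> mf fM; apply: measurable_bounded_integrable => //.
  exact: (le_lt_trans (probability_le1 m measurableT) (ltry 1)).
exists M; split; first exact: num_real.
by move=> M' hM' z _; apply: (le_trans (fM z)); exact: ltW.
Qed.

Lemma integrable_cst_probability (r : R) : m.-integrable setT (EFin \o cst r).
Proof. by apply: (bounded_integrable (M := `|r|%R) (measurable_cst r)) => z. Qed.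

Lemma integral_cst_probability (r : R) : \int[m]_z (cst r%:E) z = r%:E.
Proof.
rewrite integral_cst // -[RHS]mule1; congr (_ * _); exact: probability_setT.
Qed.

Lemma integral_indic_probability (E : set T) :
  measurable E -> \int[m]_z (\1_E z)%:E = m E.
Proof. by move=> mE; rewrite integral_indic // setIT. Qed.

Lemma probability_null_of_integral_gap (f g : T -> R) (E : set T) :
  measurable E ->
  m.-integrable setT (EFin \o f) -> m.-integrable setT (EFin \o g) ->
  (forall z, (g z + \1_E z <= f z)%R) ->
  \int[m]_z (f z)%:E = \int[m]_z (g z)%:E -> m E = 0.
Proof.
move=> mE intf intg gEf intfg.
have intE : m.-integrable setT (EFin \o \1_E).
  apply: (bounded_integrable (M := 1)) => [|z]; first exact: measurable_indic.
  by rewrite indicE; case: (_ \in _); rewrite ?normr1 ?normr0.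
have : \int[m]_z ((g z)%:E + (\1_E z)%:E) <= \int[m]_z (f z)%:E.
  by apply: le_integral => // [|z _]; [exact: integrableD | rewrite -EFinD lee_fin].
rewrite (integralD_EFin measurableT intg intE) integral_indic_probability //.
rewrite intfg -[leRHS]adde0 leeD2lE ?(integrable_fin_num measurableT intg) //.
by move=> mE0; apply/eqP; rewrite eq_le mE0 measure_ge0.
Qed.

End probability_gap.

Section depths.
Variables (R : realType) (d : measure_display) (T : measurableType d)
  (dist : T -> T -> R).
Hypotheses (dist_metric : is_metric dist) (dist_sep : dseparable dist)
  (dist_borel : borel_of dist).
Variables (P : probability T R) (mu : T).

Let dist_mu1 : measurable_fun setT (fun z : T * T => dist z.1 mu).
Proof. exact: measurableT_comp (measurable_dist_to _ _ mu) measurable_fst. Qed.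

Let dist_mu2 : measurable_fun setT (fun z : T * T => dist z.2 mu).
Proof. exact: measurableT_comp (measurable_dist_to _ _ mu) measurable_snd. Qed.

Let dist12 : measurable_fun setT (fun z : T * T => dist z.1 z.2).
Proof. exact: measurable_dist. Qed.

Lemma measurable_hker : measurable_fun setT (fun z : T * T => hker dist z.1 z.2 mu).
Proof.
rewrite (funext (fun z => hker_cosine_ratio dist_metric z.1 z.2 mu)) /cosine_ratio.
apply: measurable_funM.
  by apply: measurable_funB; first apply: measurable_funD; exact: measurable_funX.
by apply: measurableT_comp; [exact: measurable_inv | exact: measurable_funM].
Qed.

Lemma measurable_lens_set : measurable (lens_set dist mu).
Proof.
pose gap z := dist z.1 z.2 - Num.max (dist z.1 mu) (dist z.2 mu).
have mgap : measurable_fun setT gap.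
  by apply: measurable_funB => //; exact: measurable_maxr.
have -> : lens_set dist mu = gap @^-1` `[0, +oo[.
  by apply/seteqP; split => z; rewrite /preimage /= in_itv /= andbT subr_ge0.
by rewrite -[X in measurable X]setTI; exact: mgap measurableT _ (measurable_itv _).
Qed.

Let integrable_hker :
  (P \x P)%E.-integrable setT (EFin \o (fun z : T * T => hker dist z.1 z.2 mu)).
Proof.
by apply: bounded_integrable measurable_hker _ => z; exact: hker_bound.
Qed.

Lemma integral_hker_of_depth (r : R) : spatial_depth dist P mu = r%:E ->
  (\int[(P \x P)%E]_z (hker dist z.1 z.2 mu)%:E = (2 - 2 * r)%:E)%E.
Proof.
have fin := integrable_fin_num measurableT integrable_hker.
rewrite /spatial_depth -(fineK fin) -EFinM -EFinB => -[h].
by congr EFin; lra.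
Qed.

(* D = 0 gives E h = 2 = E 2, and h + 1_lens <= 2 makes the lens null. *)
Lemma lens_depth_zero : spatial_depth dist P mu = 0%E -> lens_depth dist P mu = 0%E.
Proof.
move=> /integral_hker_of_depth; rewrite mulr0 subr0 => int_hker.
apply: (probability_null_of_integral_gap (f := cst 2) measurable_lens_set).
- exact: integrable_cst_probability.
- exact: integrable_hker.
- exact: hker_plus_lens_le2.
- by rewrite int_hker integral_cst_probability.
Qed.

(* D = 2 gives E h = -2 = E (-2), and -2 + 1_(~lens) <= h makes the
   complement of the lens null. *)
Lemma lens_depth_one : spatial_depth dist P mu = 2%:E -> lens_depth dist P mu = 1%E.
Proof.
move=> /integral_hker_of_depth int_hker.
have mlensC : measurable (~` lens_set dist mu) := measurableC measurable_lens_set.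
have lensC0 : (P \x P)%E (~` lens_set dist mu) = 0%E.
  apply: (probability_null_of_integral_gap (g := cst (-2)) mlensC).
  - exact: integrable_hker.
  - exact: integrable_cst_probability.
  - exact: lensC_minus2_le_hker.
  - by rewrite int_hker integral_cst_probability; congr EFin; lra.
transitivity ((P \x P)%E (lens_set dist mu) + (P \x P)%E (~` lens_set dist mu))%E.
  by rewrite lensC0 adde0.
rewrite -measureU ?setICr //; last exact: measurable_lens_set.
by rewrite -[RHS](probability_setT (P \x P)%E); congr (_ _); exact: setUv.
Qed.

End depths.

Theorem corollary1 (R : realType) (d : measure_display) (T : measurableType d)
  (dist : T -> T -> R)
  (Hmetric : is_metric dist) (Hcomplete : dcomplete dist)
  (Hsep : dseparable dist) (Hborel : borel_of dist)
  (P : probability T R) (mu : T) :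
  (spatial_depth dist P mu = 0%E -> lens_depth dist P mu = 0%E) /\
  (spatial_depth dist P mu = 2%:E -> lens_depth dist P mu = 1%E).
Proof.
split; [exact: (lens_depth_zero Hmetric Hsep Hborel) |
        exact: (lens_depth_one Hmetric Hsep Hborel)].
Qed.
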